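(* Let $n\ge5$, $\Delta\subset B_n$ a proper ideal, and $1<k\le\lfloor\frac{n-1}2\rfloor$. Then $\mathrm{Bier}(B_n,\Delta)$ is a $k$-nearly neighborly $(n-2)$-sphere with $2n$ vertices if and only if (i) for all $A\subseteq[1,n]$, $A\in\Delta\iff[1,n]\setminus A\notin\Delta$, and (ii) every $B\subseteq[1,n]$ with $|B|\le k$ lies in $\Delta$ (and hence no $C\subseteq[1,n]$ with $|C|\ge n-k$ lies in $\Delta$).
   Context: $B_n$ is the Boolean lattice of subsets of $[1,n]$. A proper ideal $\Delta\subset B_n$ is a nonempty family of subsets of $[1,n]$ closed under taking subsets with $[1,n]\notin\Delta$. The Bier sphere $\mathrm{Bier}(B_n,\Delta)$ is the simplicial complex whose faces are the pairs $(B,C)$ with $B\subsetneq C\subseteq[1,n]$, $B\in\Delta$, $C\notin\Delta$, with $(B',C')$ a face of $(B,C)$ iff $B'\subseteq B$ and $C\subseteq C'$ (concretely the vertex set $B\sqcup\{\bar d: d\notin C\}$ on $[1,n]\sqcup\{\bar1,\dots,\bar n\}$); it is a simplicial $(n-2)$-sphere. A simplicial complex $\Gamma$ with vertex set $V$ is centrally symmetric if there is a fixed-point-free involution $\alpha$ of $V$ with $\alpha(F)$ a face for every face $F$ and $\{v,\alpha(v)\}$ not a face for all $v$. A centrally symmetric $\Gamma$ is $k$-nearly neighborly if every antipode-free vertex set (containing no pair $\{v,\alpha(v)\}$) of size at most $k$ is a face; for $k\ge2$ the involution is determined as the unique one with $\{v,\alpha(v)\}\notin\Gamma$. *)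

From mathcomp Require Import all_boot.
Set Implicit Arguments. Unset Strict Implicit. Unset Printing Implicit Defensive.

(* Elements of [1,n] are modelled by 'I_n.  The Boolean lattice B_n is {set 'I_n}. *)

Definition proper_ideal (n : nat) (Delta : {set {set 'I_n}}) : Prop :=
  [/\ Delta != set0,
      (forall A B : {set 'I_n}, B \subset A -> A \in Delta -> B \in Delta)
    & [set: 'I_n] \notin Delta].

(* Vertices of the Bier sphere: inl i stands for i, inr i stands for \bar i. *)
Definition bier_vertex (n : nat) : finType := ('I_n + 'I_n)%type.

Definition bier_face_of (n : nat) (B C : {set 'I_n}) : {set bier_vertex n} :=
  (inl @: B) :|: (inr @: (~: C)).

Definition bier_face (n : nat) (Delta : {set {set 'I_n}})
    (F : {set bier_vertex n}) : bool :=
  [exists B : {set 'I_n}, exists C : {set 'I_n},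
    [&& B \proper C, B \in Delta, C \notin Delta & F == bier_face_of B C]].

Definition vertices (T : finType) (face : {set T} -> bool) : {set T} :=
  [set v : T | face [set v]].

Definition cs_involution (T : finType) (face : {set T} -> bool) (alpha : T -> T)
    : Prop :=
  let V := vertices face in
  [/\ (forall v, v \in V -> alpha v \in V),
      (forall v, v \in V -> alpha (alpha v) = v),
      (forall v, v \in V -> alpha v != v),
      (forall F, face F -> face (alpha @: F))
    & (forall v, v \in V -> ~ face [set v; alpha v])].

Definition centrally_symmetric (T : finType) (face : {set T} -> bool) : Prop :=
  exists alpha : T -> T, cs_involution face alpha.

Definition nearly_neighborly (T : finType) (face : {set T} -> bool) (k : nat)
    : Prop :=
  exists alpha : T -> T,
    cs_involution face alpha /\
    (forall S : {set T}, S \subset vertices face ->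
       (forall v, v \in S -> alpha v \notin S) ->
       #|S| <= k -> face S).

From mathcomp Require Import all_boot.
Set Implicit Arguments. Unset Strict Implicit. Unset Printing Implicit Defensive.

(* A face (B, C) is read back from its vertex set F as B = {i | i \in F} and
   C = {d | \bar d \notin F}; in these terms the swap i <-> \bar i sends (B, C)
   to the complementary pair (~: C, ~: B).  Hence the swap preserves faces
   exactly when A \in Delta <-> ~: A \notin Delta.  If all sets of size <= k
   lie in Delta, an antipode-free S with |S| <= k gives B = S \cap [1,n] \in
   Delta and ~: C = {d | \bar d \in S} \in Delta, so C \notin Delta and S is a
   face.  Conversely, in a k-nearly neighborly Bier sphere with k >= 2 on all
   2n vertices, the involution must be the swap, because {i, \bar i} is never a
   face; neighborliness on {i | i \in B} then puts every small B into Delta. *)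

Lemma leq_card_preimset (aT rT : finType) (f : aT -> rT) (S : {set rT}) :
  injective f -> #|f @^-1: S| <= #|S|.
Proof.
move=> f_inj; rewrite -(card_imset _ f_inj); apply: subset_leq_card.
by apply/subsetP => _ /imsetP [x + ->]; rewrite inE.
Qed.

Lemma card_bier_vertex n : #|bier_vertex n| = 2 * n.
Proof. by rewrite card_sum !card_ord addnn mul2n. Qed.

Section BierFaces.

Variable n : nat.
Implicit Types (A B C : {set 'I_n}) (F S : {set bier_vertex n})
  (Delta : {set {set 'I_n}}).

Definition bierB F : {set 'I_n} := inl @^-1: F.
Definition bierC F : {set 'I_n} := ~: (inr @^-1: F).

Lemma mem_bier_face_of B C v :
  (v \in bier_face_of B C) =
  match v with inl i => i \in B | inr i => i \notin C end.
Proof.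
case: v => i; rewrite inE (mem_imset _ _ inl_inj, mem_imset _ _ inr_inj) ?inE.
  have -> : (inl i \in inr @: ~: C) = false by apply/imsetP => -[].
  by rewrite orbF.
by have -> : (inr i \in inl @: B) = false by apply/imsetP => -[].
Qed.

Lemma bierB_face_of B C : bierB (bier_face_of B C) = B.
Proof. by apply/setP => i; rewrite inE mem_bier_face_of. Qed.

Lemma bierC_face_of B C : bierC (bier_face_of B C) = C.
Proof. by apply/setP => i; rewrite in_setC inE mem_bier_face_of negbK. Qed.

Lemma bier_face_ofK F : bier_face_of (bierB F) (bierC F) = F.
Proof. by apply/setP => -[i|i]; rewrite mem_bier_face_of !inE ?negbK. Qed.

Lemma bierB_inl B : bierB (inl @: B) = B.
Proof. by apply/setP => i; rewrite inE (mem_imset _ _ inl_inj). Qed.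

Lemma bier_faceE Delta F :
  bier_face Delta F =
  [&& bierB F \proper bierC F, bierB F \in Delta & bierC F \notin Delta].
Proof.
apply/existsP/idP => [[B /existsP [C /and4P [BC B_in C_nin /eqP ->]]]|].
  by rewrite bierB_face_of bierC_face_of BC B_in C_nin.
move=> F_face; exists (bierB F); apply/existsP; exists (bierC F).
by rewrite bier_face_ofK eqxx andbT.
Qed.

Lemma bier_antipodal_nonface Delta i : ~~ bier_face Delta [set inl i; inr i].
Proof.
rewrite bier_faceE; apply/negP => /and3P [/proper_sub /subsetP BC _ _].
by have := BC i; rewrite !inE !eqxx orbT => /(_ isT).
Qed.

Definition bier_swap (v : bier_vertex n) : bier_vertex n :=
  match v with inl i => inr i | inr i => inl i end.

Lemma bier_swapK : involutive bier_swap. Proof. by case. Qed.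

Lemma bierB_swap F : bierB (bier_swap @: F) = ~: bierC F.
Proof.
by apply/setP => i; rewrite (can_imset_pre _ bier_swapK) !inE negbK.
Qed.

Lemma bierC_swap F : bierC (bier_swap @: F) = ~: bierB F.
Proof. by apply/setP => i; rewrite (can_imset_pre _ bier_swapK) !inE. Qed.

End BierFaces.

Arguments bier_swap {n}.

Section BierSphere.

Variables (n : nat) (Delta : {set {set 'I_n}}).
Implicit Types (F S : {set bier_vertex n}).
Local Notation face := (bier_face Delta).

Definition self_dual :=
  forall A : {set 'I_n}, (~: A \in Delta) = (A \notin Delta).

Lemma self_dualP :
  self_dual <-> forall A : {set 'I_n}, A \in Delta <-> ~: A \notin Delta.
Proof.
split=> [sdD A | sdD A]; first by rewrite sdD negbK.
by apply/idP/idP => A_in; [move/sdD: A_in | apply/sdD]; rewrite setCK.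
Qed.

Lemma bier_face_swap F : self_dual -> face F -> face (bier_swap @: F).
Proof.
move=> sdD; rewrite !bier_faceE bierB_swap bierC_swap properC !sdD negbK.
by case/and3P => -> -> ->.
Qed.

Lemma self_dual_bier_swap :
  set0 \in Delta -> [set: 'I_n] \notin Delta ->
  (forall F, face F -> face (bier_swap @: F)) -> self_dual.
Proof.
move=> Delta0 DeltaT swap_face A; apply/idP/idP => [CA_in | A_nin].
  have CA_ne : ~: A != setT by apply: contraNneq DeltaT => <-.
  have := swap_face (bier_face_of (~: A) setT).
  rewrite !bier_faceE bierC_swap bierB_face_of bierC_face_of setCK.
  by rewrite properT CA_ne CA_in DeltaT => /(_ isT) /and3P [].
have A_ne : A != set0 by apply: contraNneq A_nin => ->.
have := swap_face (bier_face_of set0 A).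
rewrite !bier_faceE bierB_swap bierB_face_of bierC_face_of.
by rewrite proper0 A_ne Delta0 A_nin => /(_ isT) /and3P [].
Qed.

Lemma small_antipode_free_bier_face k S :
  self_dual -> (forall B : {set 'I_n}, #|B| <= k -> B \in Delta) ->
  (forall i, inl i \in S -> inr i \notin S) -> #|S| <= k -> face S.
Proof.
move=> sdD small_in S_free S_le.
have B_in : bierB S \in Delta.
  by apply/small_in/(leq_trans (leq_card_preimset _ inl_inj)).
have C_nin : bierC S \notin Delta.
  rewrite /bierC sdD negbK.
  by apply/small_in/(leq_trans (leq_card_preimset _ inr_inj)).
rewrite bier_faceE B_in C_nin properEneq !andbT.
apply/andP; split; first by apply: contraNneq C_nin => <-.
by apply/subsetP => i; rewrite !inE => /S_free.
Qed.

Lemma cs_involution_bier_swap :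
  self_dual -> vertices face = setT -> cs_involution face bier_swap.
Proof.
move=> sdD VT; rewrite /cs_involution VT; split.
- by move=> v _; rewrite in_setT.
- by move=> v _; rewrite bier_swapK.
- by case.
- by move=> F; apply: bier_face_swap.
- case=> i _; apply/negP; last rewrite setUC; exact: bier_antipodal_nonface.
Qed.

Lemma bier_neighborly_involutionE k alpha :
  1 < k -> vertices face = setT -> cs_involution face alpha ->
  (forall S, S \subset vertices face ->
     (forall v, v \in S -> alpha v \notin S) -> #|S| <= k -> face S) ->
  alpha =1 bier_swap.
Proof.
rewrite /cs_involution => k_gt1 VT; rewrite VT => -[_ alphaK alpha_neq _ _] nb.
have {}alphaK v : alpha (alpha v) = v by rewrite alphaK ?in_setT.
have {}alpha_neq v : alpha v != v by rewrite alpha_neq ?in_setT.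
suff alpha_inl i : alpha (inl i) = inr i.
  by case=> i /=; rewrite ?alpha_inl // -alpha_inl alphaK.
apply/eqP; apply: contraR (bier_antipodal_nonface Delta i) => alpha_ne.
apply: nb; first exact: subsetT.
  move=> v; rewrite !inE => /orP [] /eqP ->.
    by rewrite negb_or alpha_neq.
  rewrite negb_or alpha_neq andbT.
  by apply: contra alpha_ne => /eqP <-; rewrite alphaK.
by rewrite cards2 (leq_trans _ k_gt1) // ltnS leq_b1.
Qed.

End BierSphere.

Theorem proposition16 (n : nat) (Delta : {set {set 'I_n}}) (k : nat) :
  5 <= n -> proper_ideal Delta -> 1 < k -> k <= (n.-1)./2 ->
  ((#|vertices (bier_face Delta)| = 2 * n /\
    nearly_neighborly (bier_face Delta) k)
   <->
   ((forall A : {set 'I_n}, (A \in Delta) <-> (~: A \notin Delta)) /\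
    (forall B : {set 'I_n}, #|B| <= k -> B \in Delta))).
Proof.
move=> _ [/set0Pn [A0 A0_in] Delta_down DeltaT] k_gt1 _.
have Delta0 : set0 \in Delta by apply: Delta_down A0_in; apply: sub0set.
split=> [[cardV [alpha [cs_alpha nb]]] | [/self_dualP sdD small_in]].
- have VT : vertices (bier_face Delta) = setT.
    by apply/eqP; rewrite eqEcard subsetT cardsT card_bier_vertex cardV leqnn.
  have alphaE := bier_neighborly_involutionE k_gt1 VT cs_alpha nb.
  have [_ _ _ alpha_face _] := cs_alpha.
  split=> [|B B_le].
    apply/self_dualP; apply: self_dual_bier_swap => // F /alpha_face.
    by rewrite (eq_imset _ alphaE).
  have : bier_face Delta (inl @: B).
    apply: nb; first by rewrite VT subsetT.
      by move=> _ /imsetP [i _ ->]; rewrite alphaE; apply/imsetP => -[].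
    exact/(leq_trans _ B_le)/eq_leq/card_imset/inl_inj.
  by rewrite bier_faceE bierB_inl => /and3P [].
- have small_face := small_antipode_free_bier_face sdD small_in.
  have VT : vertices (bier_face Delta) = setT.
    apply/setP => v; rewrite !inE; apply: small_face.
      by move=> i; rewrite !inE => /eqP <-.
    by rewrite cards1 ltnW.
  split; first by rewrite VT cardsT card_bier_vertex.
  exists bier_swap; split; first exact: cs_involution_bier_swap.
  by move=> S _ S_free; apply: small_face => i /S_free.
Qed.
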